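(* Let $(X,d_X)$ and $(Y,d_Y)$ be ultrametric spaces and let $d$ be a partial distance-preserving metric on $X\times Y$ with $d_\infty\le d$. Suppose that $d((x_1,y_1),(x_2,y_2))=d((x_2,y_1),(x_1,y_2))$ for all $x_1,x_2\in X$ and $y_1,y_2\in Y$. Then $(X\times Y,d)$ is ultrametric if and only if $\mathcal N_\varepsilon(W\times Z)=\mathcal N_\varepsilon(W)\cdot\mathcal N_\varepsilon(Z)$ for all compact sets $W\subseteq X$, $Z\subseteq Y$ and every $\varepsilon>0$ (quantities computed in $(X,d_X)$, $(Y,d_Y)$, $(X\times Y,d)$ respectively).
   Context: $d_\infty((x_1,y_1),(x_2,y_2))=\max\{d_X(x_1,x_2),d_Y(y_1,y_2)\}$. A metric $d$ on $X\times Y$ is partial distance-preserving if $d((x_1,y),(x_2,y))=d_X(x_1,x_2)$ and $d((x,y_1),(x,y_2))=d_Y(y_1,y_2)$ for all $x,x_1,x_2\in X$, $y,y_1,y_2\in Y$. Ultrametric: $\rho(a,b)\le\max\{\rho(a,c),\rho(c,b)\}$. In a metric space $(M,\rho)$ with closed balls $B(c,r)=\{x:\rho(x,c)\le r\}$, $C$ is an $\varepsilon$-net for $V$ if $V\subseteq\bigcup_{c\in C}B(c,\varepsilon)$, and for totally bounded $V$ the covering number $\mathcal N_\varepsilon(V)$ is the smallest cardinality of a subset of $V$ that is an $\varepsilon$-net for $V$. *)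

From Stdlib Require Import Reals List Classical ClassicalEpsilon.
Open Scope R_scope.

Definition is_metric {T : Type} (d : T -> T -> R) : Prop :=
  (forall x y, 0 <= d x y) /\
  (forall x y, d x y = 0 <-> x = y) /\
  (forall x y, d x y = d y x) /\
  (forall x y z, d x z <= d x y + d y z).

Definition is_ultrametric {T : Type} (d : T -> T -> R) : Prop :=
  forall a b c, d a b <= Rmax (d a c) (d c b).

Definition d_inf {X Y : Type} (dX : X -> X -> R) (dY : Y -> Y -> R)
  (p q : X * Y) : R := Rmax (dX (fst p) (fst q)) (dY (snd p) (snd q)).

Definition partial_distance_preserving {X Y : Type} (dX : X -> X -> R)
  (dY : Y -> Y -> R) (d : X * Y -> X * Y -> R) : Prop :=
  (forall x1 x2 y, d (x1, y) (x2, y) = dX x1 x2) /\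
  (forall x y1 y2, d (x, y1) (x, y2) = dY y1 y2).

Definition closed_ball {T : Type} (d : T -> T -> R) (c : T) (r : R) (x : T) : Prop :=
  d x c <= r.

Definition is_open {T : Type} (d : T -> T -> R) (U : T -> Prop) : Prop :=
  forall x, U x -> exists r, 0 < r /\ forall y, d x y < r -> U y.

Definition metric_compact {T : Type} (d : T -> T -> R) (K : T -> Prop) : Prop :=
  forall (I : Type) (U : I -> T -> Prop),
    (forall i, is_open d (U i)) ->
    (forall x, K x -> exists i, U i x) ->
    exists l : list I, forall x, K x -> exists i, In i l /\ U i x.

Definition has_net_of_card {T : Type} (d : T -> T -> R) (V : T -> Prop)
  (eps : R) (n : nat) : Prop :=
  exists C : list T, NoDup C /\ length C = n /\ (forall c, In c C -> V c) /\
    (forall v, V v -> exists c, In c C /\ closed_ball d c eps v).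

Definition is_covering_number {T : Type} (d : T -> T -> R) (V : T -> Prop)
  (eps : R) (n : nat) : Prop :=
  has_net_of_card d V eps n /\ (forall m, has_net_of_card d V eps m -> (n <= m)%nat).

(* Covering number N_eps(V) (meaningful when V is totally bounded, where the
   minimum exists; chosen via classical epsilon). *)
Definition covering_number {T : Type} (d : T -> T -> R) (V : T -> Prop)
  (eps : R) : nat :=
  epsilon (inhabits 0%nat) (is_covering_number d V eps).

Definition setX {X Y : Type} (W : X -> Prop) (Z : Y -> Prop) (p : X * Y) : Prop :=
  W (fst p) /\ Z (snd p).

(* Let d be a partial distance-preserving metric on X * Y with d_inf <= d.
   - If d is ultrametric, then for (x1,y1), (x2,y2) the ultrametric inequality
     through (x2,y1) gives d <= d_inf, so d is the sup metric.  For the sup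
     metric of two ultrametrics the covering numbers multiply: a product of
     minimal eps-nets is an eps-net of W * Z, and conversely, since a minimal
     eps-net of an ultrametric space is eps-separated, assigning to every
     product center a center of an arbitrary net of W * Z covering it is
     injective.
   - Conversely, if the covering numbers multiply, apply the formula to the
     two-point sets {x1,x2} and {y1,y2} at any radius eps >= d_inf(p,q): both
     have covering number 1, hence so does the four-point product, so one of
     the four points lies within eps of all of them; using the swap symmetry
     of d this yields d(p,q) <= eps.  Thus d <= d_inf, so d = d_inf, which is
     ultrametric. *)

From Stdlib Require Import Reals List.
From Stdlib Require Import Classical ClassicalEpsilon FunctionalExtensionality.
From Stdlib Require Import Lra Lia Wf_nat.
Open Scope R_scope.

(* Classically every type has decidable equality; needed to deduplicate and
   shrink lists of centers. *)
Definition classical_eq_dec {A : Type} : forall x y : A, {x = y} + {x <> y} :=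
  fun x y => excluded_middle_informative (x = y).

Lemma Rmax_le_iff (a b c : R) : Rmax a b <= c <-> a <= c /\ b <= c.
Proof.
  split.
  - intro H. split; eapply Rle_trans; [apply Rmax_l | exact H | apply Rmax_r | exact H].
  - intros [Ha Hb]. now apply Rmax_lub.
Qed.

Lemma nat_least_element (P : nat -> Prop) (k : nat) :
  P k -> exists n, P n /\ forall m, P m -> (n <= m)%nat.
Proof.
  induction k as [k IH] using lt_wf_ind. intro Hk.
  destruct (classic (exists m, (m < k)%nat /\ P m)) as [[m [Hm Pm]] | Hnone].
  - exact (IH m Hm Pm).
  - exists k. split; [exact Hk |]. intros m Pm.
    destruct (Nat.lt_ge_cases m k) as [Hlt | Hge]; [| exact Hge].
    exfalso. apply Hnone. eauto.
Qed.

Lemma NoDup_list_prod {A B : Type} (l : list A) (l' : list B) :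
  NoDup l -> NoDup l' -> NoDup (list_prod l l').
Proof.
  induction l as [| x l IH]; intros Hl Hl'; simpl; [constructor |].
  inversion Hl as [| ? ? Hx Hl0]; subst. apply NoDup_app.
  - apply NoDup_map_NoDup_ForallPairs; [| exact Hl'].
    intros a b _ _ E. now inversion E.
  - now apply IH.
  - intros [a b] Ha Hb. apply in_map_iff in Ha as [? [E _]]. inversion E; subst.
    apply in_prod_iff in Hb. tauto.
Qed.

Section CoveringNumbers.

Context {T : Type} (d : T -> T -> R).

Lemma net_of_list (V : T -> Prop) (eps : R) (L : list T) :
  (forall c, In c L -> V c) ->
  (forall v, V v -> exists c, In c L /\ closed_ball d c eps v) ->
  exists k, has_net_of_card d V eps k /\ (k <= length L)%nat.
Proof.
  intros HV Hcov. set (C := nodup classical_eq_dec L).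
  exists (length C). split.
  - exists C. repeat split; [apply NoDup_nodup | |].
    + intros c Hc. apply HV. now apply (nodup_In classical_eq_dec).
    + intros v Hv. destruct (Hcov v Hv) as [c [Hc Hb]].
      exists c. split; [now apply (nodup_In classical_eq_dec) | exact Hb].
  - apply NoDup_incl_length; [apply NoDup_nodup |].
    intros x Hx. exact (proj1 (nodup_In classical_eq_dec L x) Hx).
Qed.

Lemma covering_number_spec (V : T -> Prop) (eps : R) (k : nat) :
  has_net_of_card d V eps k ->
  is_covering_number d V eps (covering_number d V eps).
Proof.
  intro Hk. unfold covering_number. apply epsilon_spec.
  destruct (nat_least_element _ _ Hk) as [n [Hn Hmin]]. now exists n.
Qed.

Lemma covering_number_eq (V : T -> Prop) (eps : R) (n : nat) :
  is_covering_number d V eps n -> covering_number d V eps = n.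
Proof.
  intro Hn. destruct Hn as [Hnet Hmin].
  destruct (covering_number_spec V eps n Hnet) as [Hnet' Hmin'].
  apply Nat.le_antisymm; auto.
Qed.

Lemma covering_number_one (V : T -> Prop) (eps : R) (c : T) :
  V c -> (forall v, V v -> closed_ball d c eps v) -> covering_number d V eps = 1%nat.
Proof.
  intros Hc Hcov. apply covering_number_eq. split.
  - exists (c :: nil). repeat split.
    + repeat constructor. simpl. tauto.
    + intros c' [<- | []]. exact Hc.
    + intros v Hv. exists c. split; [left; reflexivity | auto].
  - intros m [C [_ [<- [_ HC]]]]. destruct (HC c Hc) as [c' [Hc' _]].
    destruct C; [contradiction | simpl; lia].
Qed.

Lemma single_center_of_covering_number_one (V : T -> Prop) (eps : R) (k : nat) :
  has_net_of_card d V eps k -> covering_number d V eps = 1%nat ->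
  exists c, V c /\ forall v, V v -> closed_ball d c eps v.
Proof.
  intros Hk E. destruct (covering_number_spec V eps k Hk) as [[C [_ [HL [HV Hcov]]]] _].
  rewrite E in HL. destruct C as [| c [| ]]; simpl in HL; try lia.
  exists c. split; [apply HV; left; reflexivity |].
  intros v Hv. destruct (Hcov v Hv) as [c' [[<- | []] Hb]]. exact Hb.
Qed.

Lemma list_compact (l : list T) : metric_compact d (fun x => In x l).
Proof.
  intros I U _ Hcov. induction l as [| a l IH].
  - exists nil. intros x [].
  - destruct (Hcov a (or_introl eq_refl)) as [i Hi].
    destruct IH as [L HL]; [intros x Hx; apply Hcov; now right |].
    exists (i :: L). intros x [<- | Hx].
    + exists i. split; [left |]; auto.
    + destruct (HL x Hx) as [j [Hj Uj]]. exists j. split; [right |]; auto.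
Qed.

Hypothesis hd : is_metric d.

Lemma finite_set_has_net (V : T -> Prop) (L : list T) (eps : R) :
  0 <= eps -> (forall v, V v <-> In v L) -> exists k, has_net_of_card d V eps k.
Proof.
  destruct hd as [_ [hd0 _]]. intros He HL.
  destruct (net_of_list V eps L) as [k [Hk _]].
  - intros c Hc. now apply HL.
  - intros v Hv. exists v. split; [now apply HL |].
    unfold closed_ball. rewrite (proj2 (hd0 v v) eq_refl). exact He.
  - now exists k.
Qed.

Lemma compact_has_net (W : T -> Prop) (eps : R) :
  metric_compact d W -> 0 < eps -> exists k, has_net_of_card d W eps k.
Proof.
  destruct hd as [_ [hd0 [hsym htri]]]. intros Hcp He.
  destruct (Hcp {c : T | W c} (fun i y => d (proj1_sig i) y < eps)) as [l Hl].
  - intros i x Hx. exists (eps - d (proj1_sig i) x). split; [lra |].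
    intros y Hy. pose proof (htri (proj1_sig i) x y). lra.
  - intros x Hx. exists (exist _ x Hx). simpl.
    rewrite (proj2 (hd0 x x) eq_refl). exact He.
  - destruct (net_of_list W eps (map (@proj1_sig _ _) l)) as [k [Hk _]].
    + intros c Hc. apply in_map_iff in Hc as [[x Hx] [<- _]]. exact Hx.
    + intros v Hv. destruct (Hl v Hv) as [i [Hi Hu]]. exists (proj1_sig i).
      split; [now apply in_map |]. unfold closed_ball. rewrite hsym. lra.
    + now exists k.
Qed.

Lemma pair_covering_number (a b : T) (eps : R) :
  0 <= eps -> d a b <= eps -> covering_number d (fun x => In x (a :: b :: nil)) eps = 1%nat.
Proof.
  destruct hd as [_ [hd0 [hsym _]]]. intros He Hab.
  apply (covering_number_one _ _ a); [left; reflexivity |].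
  intros v [<- | [<- | []]]; unfold closed_ball.
  - rewrite (proj2 (hd0 a a) eq_refl). exact He.
  - now rewrite hsym.
Qed.

Hypothesis hu : is_ultrametric d.

(* In an ultrametric space the centers of a minimal eps-net are pairwise at
   distance > eps: otherwise one of two close centers could be dropped, since
   every point covered by it is also covered by the other. *)
Lemma minimal_net_separated (V : T -> Prop) (eps : R) (C : list T) :
  NoDup C -> (forall c, In c C -> V c) ->
  (forall v, V v -> exists c, In c C /\ closed_ball d c eps v) ->
  (forall m, has_net_of_card d V eps m -> (length C <= m)%nat) ->
  forall a b, In a C -> In b C -> d a b <= eps -> a = b.
Proof.
  destruct hd as [_ [_ [hsym _]]].
  intros HN HV Hcov Hmin a b Ha Hb Hab. apply NNPP. intro Hne.
  destruct (net_of_list V eps (remove classical_eq_dec b C)) as [k [Hk Hlen]].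
  - intros c Hc. apply in_remove in Hc. now apply HV.
  - intros v Hv. destruct (Hcov v Hv) as [c [Hc Hcv]].
    destruct (classical_eq_dec c b) as [-> | Hcb].
    + exists a. split; [now apply in_in_remove |].
      unfold closed_ball in *. pose proof (hu v a b) as Hvab.
      rewrite (hsym b a) in Hvab. apply Rle_trans with (1 := Hvab).
      now apply Rmax_lub.
    + exists c. split; [now apply in_in_remove | exact Hcv].
  - pose proof (Hmin k Hk). pose proof (remove_length_lt classical_eq_dec C b Hb). lia.
Qed.

End CoveringNumbers.

Section SupMetric.

Context {X Y : Type} (dX : X -> X -> R) (dY : Y -> Y -> R).

Lemma d_inf_le_iff (p q : X * Y) (eps : R) :
  d_inf dX dY p q <= eps <-> dX (fst p) (fst q) <= eps /\ dY (snd p) (snd q) <= eps.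
Proof. apply Rmax_le_iff. Qed.

Lemma d_inf_ultrametric :
  is_ultrametric dX -> is_ultrametric dY -> is_ultrametric (d_inf dX dY).
Proof.
  intros hXu hYu a b c. unfold d_inf. apply Rmax_lub.
  - eapply Rle_trans; [apply hXu |]. eapply Rle_trans.
    + apply Rle_max_compat_r, Rmax_l.
    + apply Rle_max_compat_l, Rmax_l.
  - eapply Rle_trans; [apply hYu |]. eapply Rle_trans.
    + apply Rle_max_compat_r, Rmax_r.
    + apply Rle_max_compat_l, Rmax_r.
Qed.

Lemma product_net (W : X -> Prop) (Z : Y -> Prop) (eps : R) (nW nZ : nat) :
  has_net_of_card dX W eps nW -> has_net_of_card dY Z eps nZ ->
  has_net_of_card (d_inf dX dY) (setX W Z) eps (nW * nZ).
Proof.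
  intros [CW [NW [LW [VW CovW]]]] [CZ [NZ [LZ [VZ CovZ]]]].
  exists (list_prod CW CZ). split; [| split; [| split]].
  - now apply NoDup_list_prod.
  - rewrite length_prod. now subst.
  - intros [a b] Hab. apply in_prod_iff in Hab. split; [apply VW | apply VZ]; tauto.
  - intros [x y] [Hx Hy].
    destruct (CovW x Hx) as [a [Ha Hxa]]. destruct (CovZ y Hy) as [b [Hb Hyb]].
    exists (a, b). split; [now apply in_prod_iff |]. now apply d_inf_le_iff.
Qed.

Hypotheses (hX : is_metric dX) (hXu : is_ultrametric dX)
  (hY : is_metric dY) (hYu : is_ultrametric dY).

(* Lower bound: if CW and CZ are eps-separated subsets of W and Z, any eps-net
   C of W * Z for the sup metric has at least |CW| * |CZ| points, because a
   common center of (a,b) and (a',b') would put a, a' (resp. b, b') within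
   eps of each other. *)
Lemma separated_product_lower_bound (W : X -> Prop) (Z : Y -> Prop) (eps : R)
  (CW : list X) (CZ : list Y) (C : list (X * Y)) :
  NoDup CW -> NoDup CZ -> (forall a, In a CW -> W a) -> (forall b, In b CZ -> Z b) ->
  (forall a a', In a CW -> In a' CW -> dX a a' <= eps -> a = a') ->
  (forall b b', In b CZ -> In b' CZ -> dY b b' <= eps -> b = b') ->
  (forall v, setX W Z v -> exists c, In c C /\ closed_ball (d_inf dX dY) c eps v) ->
  (length CW * length CZ <= length C)%nat.
Proof.
  intros NW NZ VW VZ SepW SepZ CovC.
  set (center := fun q : X * Y =>
         epsilon (inhabits q) (fun c => In c C /\ closed_ball (d_inf dX dY) c eps q)).
  assert (Hcenter : forall q, In q (list_prod CW CZ) ->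
            In (center q) C /\ closed_ball (d_inf dX dY) (center q) eps q).
  { intros [a b] Hq. apply epsilon_spec, CovC. apply in_prod_iff in Hq.
    split; [apply VW | apply VZ]; tauto. }
  rewrite <- length_prod, <- (length_map center).
  apply NoDup_incl_length.
  - apply NoDup_map_NoDup_ForallPairs; [| now apply NoDup_list_prod].
    intros [a b] [a' b'] Hq Hq' E.
    destruct (Hcenter _ Hq) as [_ B]. destruct (Hcenter _ Hq') as [_ B'].
    rewrite E in B. unfold closed_ball in B, B'.
    apply d_inf_le_iff in B as [BX BY]. apply d_inf_le_iff in B' as [BX' BY'].
    apply in_prod_iff in Hq as [Ha Hb]. apply in_prod_iff in Hq' as [Ha' Hb'].
    destruct hX as [_ [_ [sX _]]]. destruct hY as [_ [_ [sY _]]].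
    set (c := center (a', b')) in *. simpl in *. f_equal.
    + apply SepW; auto. apply (Rle_trans _ _ _ (hXu a a' (fst c))).
      rewrite (sX (fst c)). now apply Rmax_lub.
    + apply SepZ; auto. apply (Rle_trans _ _ _ (hYu b b' (snd c))).
      rewrite (sY (snd c)). now apply Rmax_lub.
  - intros c Hc. apply in_map_iff in Hc as [q [<- Hq]]. now apply Hcenter.
Qed.

Lemma covering_number_setX_d_inf (W : X -> Prop) (Z : Y -> Prop) (eps : R) (kW kZ : nat) :
  has_net_of_card dX W eps kW -> has_net_of_card dY Z eps kZ ->
  covering_number (d_inf dX dY) (setX W Z) eps =
    (covering_number dX W eps * covering_number dY Z eps)%nat.
Proof.
  intros HkW HkZ.
  destruct (covering_number_spec dX W eps kW HkW) as [HnetW MinW].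
  destruct (covering_number_spec dY Z eps kZ HkZ) as [HnetZ MinZ].
  pose proof (product_net _ _ _ _ _ HnetW HnetZ) as Hprod.
  destruct (covering_number_spec _ _ _ _ Hprod) as [[C [_ [LC [_ CovC]]]] MinC].
  apply Nat.le_antisymm; [now apply MinC |].
  destruct HnetW as [CW [NW [LW [VW CovW]]]]. destruct HnetZ as [CZ [NZ [LZ [VZ CovZ]]]].
  rewrite <- LC, <- LW, <- LZ.
  apply (separated_product_lower_bound W Z eps); auto.
  - apply (minimal_net_separated dX hX hXu W eps); auto. now rewrite LW.
  - apply (minimal_net_separated dY hY hYu Z eps); auto. now rewrite LZ.
Qed.

End SupMetric.

Section ProductMetric.

Context {X Y : Type} (dX : X -> X -> R) (dY : Y -> Y -> R) (d : X * Y -> X * Y -> R).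
Hypothesis hinf : forall p q, d_inf dX dY p q <= d p q.

(* An ultrametric partial distance-preserving metric above d_inf is d_inf:
   route (x1,y1) -> (x2,y1) -> (x2,y2). *)
Lemma ultrametric_product_is_d_inf :
  partial_distance_preserving dX dY d -> is_ultrametric d -> d = d_inf dX dY.
Proof.
  intros [pX pY] hu. extensionality p. extensionality q.
  destruct p as [x1 y1], q as [x2 y2]. apply Rle_antisym; [| apply hinf].
  pose proof (hu (x1, y1) (x2, y2) (x2, y1)) as H. now rewrite pX, pY in H.
Qed.

Hypotheses (hd : is_metric d)
  (hswap : forall x1 x2 y1 y2, d (x1, y1) (x2, y2) = d (x2, y1) (x1, y2)).

(* If some point of {x1,x2} * {y1,y2} is within eps of all four points, then
   d((x1,y1),(x2,y2)) <= eps: a diagonal center is within eps of the opposite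
   corner, and for an anti-diagonal center the swap symmetry identifies its
   distance to the opposite corner with d((x1,y1),(x2,y2)). *)
Lemma four_point_center (x1 x2 : X) (y1 y2 : Y) (a : X) (b : Y) (eps : R) :
  In a (x1 :: x2 :: nil) -> In b (y1 :: y2 :: nil) ->
  (forall x y, In x (x1 :: x2 :: nil) -> In y (y1 :: y2 :: nil) -> d (x, y) (a, b) <= eps) ->
  d (x1, y1) (x2, y2) <= eps.
Proof.
  destruct hd as [_ [_ [hsym _]]]. intros Ha Hb K.
  assert (K' : forall x y, In x (x1 :: x2 :: nil) -> In y (y1 :: y2 :: nil) ->
                 d (a, b) (x, y) <= eps) by (intros; rewrite hsym; auto).
  destruct Ha as [<- | [<- | []]]; destruct Hb as [<- | [<- | []]].
  - apply K'; right; left; reflexivity.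
  - rewrite hswap. apply K; [right |]; left; reflexivity.
  - rewrite hswap, hsym. apply K; [left | right; left]; reflexivity.
  - apply K; left; reflexivity.
Qed.

Hypotheses (hX : is_metric dX) (hY : is_metric dY).

(* Multiplicativity of covering numbers forces d <= d_inf: apply it to the
   two-point sets {x1,x2}, {y1,y2} at every radius eps >= d_inf(p,q). *)
Lemma product_formula_le_d_inf :
  (forall (W : X -> Prop) (Z : Y -> Prop) (eps : R),
     metric_compact dX W -> metric_compact dY Z -> 0 < eps ->
     covering_number d (setX W Z) eps =
       (covering_number dX W eps * covering_number dY Z eps)%nat) ->
  forall p q, d p q <= d_inf dX dY p q.
Proof.
  intros Hform [x1 y1] [x2 y2]. apply Rle_plus_epsilon. intros e He.
  set (eps := d_inf dX dY (x1, y1) (x2, y2) + e).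
  assert (Hpos : 0 < eps).
  { assert (0 <= d_inf dX dY (x1, y1) (x2, y2)) by
      (eapply Rle_trans; [apply (proj1 hX x1 x2) | apply Rmax_l]).
    unfold eps. lra. }
  assert (Heps : d_inf dX dY (x1, y1) (x2, y2) <= eps) by (unfold eps; lra).
  apply d_inf_le_iff in Heps as [HepsX HepsY]. simpl in HepsX, HepsY.
  set (W := fun x => In x (x1 :: x2 :: nil)). set (Z := fun y => In y (y1 :: y2 :: nil)).
  assert (Hone : covering_number d (setX W Z) eps = 1%nat).
  { rewrite (Hform W Z eps (list_compact dX _) (list_compact dY _) Hpos).
    unfold W, Z.
    rewrite (pair_covering_number dX hX x1 x2 eps), (pair_covering_number dY hY y1 y2 eps);
      auto; lra. }
  destruct (finite_set_has_net d hd (setX W Z) (list_prod (x1 :: x2 :: nil) (y1 :: y2 :: nil))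
              eps) as [k Hk]; [lra | intros [x y]; symmetry; apply in_prod_iff |].
  destruct (single_center_of_covering_number_one d _ _ _ Hk Hone) as [[a b] [[Ha Hb] Hc]].
  apply (four_point_center x1 x2 y1 y2 a b); auto.
  intros x y Hx Hy. now apply (Hc (x, y)).
Qed.

End ProductMetric.

Theorem corollary4p8 (X Y : Type) (dX : X -> X -> R) (dY : Y -> Y -> R)
  (d : X * Y -> X * Y -> R)
  (hX : is_metric dX) (hXu : is_ultrametric dX)
  (hY : is_metric dY) (hYu : is_ultrametric dY)
  (hd : is_metric d) (hpdp : partial_distance_preserving dX dY d)
  (hinf : forall p q, d_inf dX dY p q <= d p q)
  (hswap : forall x1 x2 y1 y2, d (x1, y1) (x2, y2) = d (x2, y1) (x1, y2)) :
  is_ultrametric d <->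
  (forall (W : X -> Prop) (Z : Y -> Prop) (eps : R),
     metric_compact dX W -> metric_compact dY Z -> 0 < eps ->
     covering_number d (setX W Z) eps =
       (covering_number dX W eps * covering_number dY Z eps)%nat).
Proof.
  split.
  - intros hu W Z eps HW HZ He.
    rewrite (ultrametric_product_is_d_inf dX dY d hinf hpdp hu).
    destruct (compact_has_net dX hX W eps HW He) as [kW HkW].
    destruct (compact_has_net dY hY Z eps HZ He) as [kZ HkZ].
    exact (covering_number_setX_d_inf dX dY hX hXu hY hYu W Z eps kW kZ HkW HkZ).
  - intro Hform.
    assert (Hd : d = d_inf dX dY).
    { extensionality p. extensionality q. apply Rle_antisym; [| apply hinf].
      exact (product_formula_le_d_inf dX dY d hd hswap hX hY Hform p q). }
    rewrite Hd. now apply d_inf_ultrametric.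
Qed.
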